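(* Let $A\subset\mathbb{N}_0$ be such that $A^2+A=\mathbb{N}_0$. Then (a) $\alpha_A\ge 1/3$; (b) $\beta_A\ge 1/2$; (c) $\alpha_A+\beta_A\ge 1$.
   Context: $\mathbb{N}_0$ is the set of nonnegative integers; $A^2=\{ab:a,b\in A\}$, $A^2+A=\{x+y:x\in A^2,y\in A\}$; $A(X)=|A\cap[1,X]|$. For $A\subset\mathbb{N}_0$, $$\alpha_A=\inf\Big\{t\ge 0: \liminf_{X\to\infty}\frac{A(X)}{X^t}<\infty\Big\},\qquad \beta_A=\inf\Big\{t\ge 0: \limsup_{X\to\infty}\frac{A(X)}{X^t}<\infty\Big\}.$$ *)

From Stdlib Require Import Reals Lra ClassicalEpsilon.
From Coquelicot Require Import Coquelicot.
Open Scope R_scope.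

Definition pdec (P : Prop) : bool :=
  if excluded_middle_informative P then true else false.

(* A^2 + A = N_0 : every n is a*b + c with a, b, c in A *)
Definition prodsum_all (A : nat -> Prop) : Prop :=
  forall n : nat, exists a b c : nat, A a /\ A b /\ A c /\ n = (a * b + c)%nat.

Fixpoint countA (A : nat -> Prop) (n : nat) : nat :=
  match n with
  | O => O
  | S m => (countA A m + (if pdec (A (S m)) then 1 else 0))%nat
  end.

(* A(X) = |A ∩ [1, X]| for real X (0 for X < 1) *)
Definition countR (A : nat -> Prop) (X : R) : R :=
  INR (countA A (Z.to_nat (Int_part X))).

Definition liminf_finite (A : nat -> Prop) (t : R) : Prop :=
  exists C : R, forall X0 : R, exists X : R,
    X0 <= X /\ 1 <= X /\ countR A X / Rpower X t <= C.

Definition limsup_finite (A : nat -> Prop) (t : R) : Prop :=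
  exists C : R, exists X0 : R, forall X : R,
    X0 <= X -> 1 <= X -> countR A X / Rpower X t <= C.

Definition alphaA (A : nat -> Prop) : Rbar :=
  Glb_Rbar (fun t => 0 <= t /\ liminf_finite A t).

Definition betaA (A : nat -> Prop) : Rbar :=
  Glb_Rbar (fun t => 0 <= t /\ limsup_finite A t).

From Stdlib Require Import Reals.
From Coquelicot Require Import Coquelicot.
From Stdlib Require Import Lra Lia List ZArith ClassicalEpsilon.
Open Scope R_scope.

(* Every [n <= N] is [a * b + c] with [a, b, c] in [A], so [N + 1 <= (1 + P(N)) (1 + A(N))],
   where [P(N)] counts the pairs [(a, b)] of positive elements of [A] with [a * b <= N].
   Trivially [P(N) <= A(N)^2]; along a sequence with [A(N) <= C N^t] this gives
   [N << N^(3t)], hence [alpha >= 1/3]. If moreover [A(X) <= K X^s] for all [X], splitting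
   [a] into dyadic blocks gives [P(N) << N^s log N], hence [N << N^(t+s) log N] along the
   sequence and [alpha + beta >= 1]; [beta >= 1/2] is the case [t = s]. Taking
   [2^l <= N < 2^(l+1)] reduces each estimate to [2^l <= D (l + 1) (2^e)^l] for infinitely
   many [l], which forces [e >= 1]. *)

Lemma pdec_true (P : Prop) : P -> pdec P = true.
Proof. unfold pdec; destruct excluded_middle_informative; tauto. Qed.

Definition elemsA (A : nat -> Prop) (n : nat) : list nat :=
  filter (fun k => pdec (A k)) (seq 1 n).

Lemma elemsA_succ A n :
  elemsA A (S n) = elemsA A n ++ (if pdec (A (S n)) then S n :: nil else nil).
Proof. unfold elemsA. rewrite seq_S, filter_app. reflexivity. Qed.

Lemma length_elemsA A n : length (elemsA A n) = countA A n.
Proof.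
  induction n as [|n IH]; [reflexivity|].
  rewrite elemsA_succ, length_app, IH; simpl.
  destruct (pdec (A (S n))); simpl; lia.
Qed.

Lemma in_elemsA A n x : (1 <= x <= n)%nat -> A x -> In x (elemsA A n).
Proof.
  intros Hx Ax. apply filter_In.
  split; [apply in_seq; lia | now apply pdec_true].
Qed.

Lemma countA_mono A m n : (m <= n)%nat -> (countA A m <= countA A n)%nat.
Proof. induction 1; simpl; lia. Qed.

Definition pairsA (A : nat -> Prop) (N M : nat) : list (nat * nat) :=
  flat_map (fun a => map (pair a) (elemsA A (N / a))) (elemsA A M).

Definition pair_count (A : nat -> Prop) (N M : nat) : nat := length (pairsA A N M).

Lemma pair_count_succ A N M :
  pair_count A N (S M) =
  (pair_count A N M + if pdec (A (S M)) then countA A (N / S M) else 0)%nat.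
Proof.
  unfold pair_count, pairsA. rewrite elemsA_succ, flat_map_app, length_app.
  destruct (pdec (A (S M))); cbn [flat_map];
    rewrite ?app_nil_r, ?length_map, ?length_elemsA; reflexivity.
Qed.

Lemma in_pairsA A N a b :
  A a -> A b -> (1 <= a)%nat -> (1 <= b)%nat -> (a * b <= N)%nat -> In (a, b) (pairsA A N N).
Proof.
  intros Aa Ab Ha Hb Hab. apply in_flat_map. exists a. split.
  - apply in_elemsA; auto; nia.
  - apply in_map, in_elemsA; auto. split; [lia|]. apply Nat.div_le_lower_bound; nia.
Qed.

Lemma pair_count_mono A N m n : (m <= n)%nat -> (pair_count A N m <= pair_count A N n)%nat.
Proof. induction 1; rewrite ?pair_count_succ; lia. Qed.

Lemma pair_count_le_mul A N M : (pair_count A N M <= countA A M * countA A N)%nat.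
Proof.
  induction M as [|M IH]; [reflexivity|].
  rewrite pair_count_succ; cbn [countA].
  assert (countA A (N / S M) <= countA A N)%nat.
  { apply countA_mono, Nat.Div0.div_le_upper_bound; nia. }
  destruct (pdec (A (S M))); nia.
Qed.

Lemma pair_count_add A N M d :
  (pair_count A N (M + d) <= pair_count A N M + countA A (M + d) * countA A (N / S M))%nat.
Proof.
  induction d as [|d IH]; [rewrite Nat.add_0_r; lia|].
  rewrite Nat.add_succ_r, pair_count_succ; cbn [countA].
  assert (countA A (N / S (M + d)) <= countA A (N / S M))%nat.
  { apply countA_mono, Nat.div_le_compat_l; lia. }
  destruct (pdec (A (S (M + d)))); nia.
Qed.

(* Each [n <= N] is [a * b + c] with [c] in [{0} ∪ A ∩ [1, N]] and either [a * b = 0],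
   covered by the dummy pair [(0, 0)], or [(a, b)] counted by [pair_count A N N]. *)
Lemma succ_le_representations A (hA : prodsum_all A) N :
  (S N <= (1 + pair_count A N N) * (1 + countA A N))%nat.
Proof.
  set (cands := list_prod ((0, 0)%nat :: pairsA A N N) (0%nat :: elemsA A N)).
  assert (Hcover : incl (seq 0 (S N)) (map (fun '((a, b), c) => a * b + c)%nat cands)).
  { intros n Hn. apply in_seq in Hn.
    destruct (hA n) as (a & b & c & Aa & Ab & Ac & ->).
    assert (Hc : In c (0%nat :: elemsA A N)).
    { destruct c; [now left | right; apply in_elemsA; auto; lia]. }
    apply in_map_iff. destruct (Nat.eq_dec (a * b) 0) as [Hab | Hab].
    - exists ((0, 0), c)%nat. split; [simpl; lia | apply in_prod; [now left | exact Hc]].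
    - exists ((a, b), c). split; [reflexivity|].
      apply in_prod; [right; apply in_pairsA; auto; nia | exact Hc]. }
  pose proof (NoDup_incl_length (seq_NoDup (S N) 0) Hcover) as H.
  unfold cands in H. rewrite length_seq, length_map, length_prod in H. simpl in H.
  unfold pair_count. rewrite length_elemsA in H. lia.
Qed.

Section DyadicPairCount.

Variables (A : nat -> Prop) (K r : R).
Hypothesis countA_pow2_le : forall m, INR (countA A (2 ^ m)) <= K * r ^ m.

(* Pairs with [a] in the dyadic block [(2^j, 2^(j+1)]] number at most
   [A(2^(j+1)) A(N / 2^j) <= K^2 r^(k+1)]. *)
Lemma pair_count_pow2 N k : (N <= 2 ^ k)%nat -> forall j, (j <= k)%nat ->
  INR (pair_count A N (2 ^ j)) <= K * r ^ k + INR j * (K * K * r ^ S k).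
Proof.
  intros HN j. induction j as [|j IH]; intros Hj.
  - assert (Hc : INR (countA A N) <= K * r ^ k).
    { apply (Rle_trans _ (INR (countA A (2 ^ k)))).
      - apply le_INR, countA_mono, HN.
      - apply countA_pow2_le. }
    change (2 ^ 0)%nat with 1%nat. change (pair_count A N 0) with 0%nat in *.
    rewrite pair_count_succ, Nat.div_1_r, Nat.add_0_l, INR_0, Rmult_0_l, Rplus_0_r.
    destruct (pdec (A 1%nat)); [exact Hc | rewrite INR_0; apply (Rle_trans _ _ _ (pos_INR _) Hc)].
  - assert (Hq : (N / S (2 ^ j) <= 2 ^ (k - j))%nat).
    { apply Nat.lt_le_incl, Nat.Div0.div_lt_upper_bound.
      assert (2 ^ k = 2 ^ j * 2 ^ (k - j))%nat by (rewrite <- Nat.pow_add_r; f_equal; lia).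
      pose proof (Nat.pow_nonzero 2 (k - j) ltac:(lia)). nia. }
    assert (Hc1 : INR (countA A (N / S (2 ^ j))) <= K * r ^ (k - j)).
    { apply (Rle_trans _ (INR (countA A (2 ^ (k - j))))).
      - apply le_INR, countA_mono, Hq.
      - apply countA_pow2_le. }
    assert (Hc2 : INR (countA A (2 ^ S j)) * INR (countA A (N / S (2 ^ j))) <= K * K * r ^ S k).
    { replace (K * K * r ^ S k) with ((K * r ^ S j) * (K * r ^ (k - j)))
        by (replace (S k) with (S j + (k - j))%nat by lia; rewrite pow_add; ring).
      apply Rmult_le_compat; auto using pos_INR. }
    pose proof (pair_count_add A N (2 ^ j) (2 ^ j)) as Hadd.
    replace (2 ^ j + 2 ^ j)%nat with (2 ^ S j)%nat in Hadd by (simpl; lia).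
    apply le_INR in Hadd. rewrite plus_INR, mult_INR in Hadd.
    specialize (IH ltac:(lia)). rewrite S_INR. lra.
Qed.

End DyadicPairCount.

Lemma Rpower_pow_base x n t : 0 < x -> Rpower (x ^ n) t = Rpower x t ^ n.
Proof.
  intros Hx. rewrite <- Rpower_pow, <- Rpower_pow by (try apply exp_pos; exact Hx).
  rewrite !Rpower_mult, Rmult_comm. reflexivity.
Qed.

Lemma Rpower_INR_pow2 m t : Rpower (INR (2 ^ m)) t = Rpower 2 t ^ m.
Proof.
  rewrite pow_INR. replace (INR 2) with 2 by (simpl; lra).
  apply Rpower_pow_base; lra.
Qed.

Lemma one_le_Rpower2 t : 0 <= t -> 1 <= Rpower 2 t.
Proof. intros Ht. rewrite <- (Rpower_O 2) by lra. apply Rle_Rpower; lra. Qed.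

Lemma countR_INR A n : countR A (INR n) = INR (countA A n).
Proof. unfold countR. rewrite Int_part_INR, Nat2Z.id. reflexivity. Qed.

Lemma countR_floor A X : 1 <= X ->
  exists N, countR A X = INR (countA A N) /\ INR N <= X < INR N + 1.
Proof.
  intros HX. destruct (base_Int_part X) as [Hlo Hhi].
  assert (Hpos : (0 <= Int_part X)%Z) by (apply le_IZR; lra).
  exists (Z.to_nat (Int_part X)). split; [reflexivity|].
  rewrite INR_IZR_INZ, Z2Nat.id by exact Hpos. lra.
Qed.

Lemma limsup_finite_liminf_finite A t : limsup_finite A t -> liminf_finite A t.
Proof.
  intros [C [X0 H]]. exists C. intros X1. exists (Rmax (Rmax X0 X1) 1).
  pose proof (Rmax_l (Rmax X0 X1) 1). pose proof (Rmax_r (Rmax X0 X1) 1).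
  pose proof (Rmax_l X0 X1). pose proof (Rmax_r X0 X1).
  split; [lra|]. split; [lra|]. apply H; lra.
Qed.

Lemma limsup_finite_pow2 A t : 0 <= t -> limsup_finite A t ->
  exists K, forall m, INR (countA A (2 ^ m)) <= K * Rpower 2 t ^ m.
Proof.
  intros Ht [C [X0 H]]. destruct (INR_unbounded X0) as [M0 HM0].
  exists (Rmax C 0 + INR (countA A M0)). intros m.
  assert (Hr : 1 <= Rpower 2 t ^ m) by (apply pow_R1_Rle, one_le_Rpower2, Ht).
  pose proof (Rmax_l C 0). pose proof (Rmax_r C 0). pose proof (pos_INR (countA A M0)).
  destruct (Rle_lt_dec X0 (INR (2 ^ m))) as [Hle | Hlt].
  - assert (Hm1 : 1 <= INR (2 ^ m)) by (apply (le_INR 1), Nat.neq_0_lt_0, Nat.pow_nonzero; lia).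
    specialize (H _ Hle Hm1). rewrite countR_INR, Rpower_INR_pow2 in H.
    apply Rle_div_l in H; [nra | lra].
  - assert (Hm : INR (countA A (2 ^ m)) <= INR (countA A M0)).
    { apply le_INR, countA_mono, INR_le. lra. }
    nra.
Qed.

Lemma liminf_finite_pow2 A t : 0 <= t -> liminf_finite A t ->
  exists C, forall K0, exists N l, (K0 <= l)%nat /\ (2 ^ l <= N < 2 ^ S l)%nat /\
    INR (countA A N) <= C * Rpower 2 t ^ S l.
Proof.
  intros Ht [C H]. exists (Rmax C 0). intros K0.
  destruct (H (INR (2 ^ K0) + 1)) as (X & HX0 & HX1 & HXC).
  destruct (countR_floor A X HX1) as (N & HcN & HNlo & HNhi).
  assert (HN : (2 ^ K0 < N)%nat) by (apply INR_lt; lra).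
  pose proof (Nat.log2_spec N ltac:(lia)) as Hl.
  exists N, (Nat.log2 N). split; [|split; [exact Hl|]].
  - apply Nat.log2_le_pow2; lia.
  - rewrite HcN in HXC. apply Rle_div_l in HXC; [|apply exp_pos].
    assert (HXr : Rpower X t <= Rpower 2 t ^ S (Nat.log2 N)).
    { rewrite <- Rpower_INR_pow2. apply Rle_Rpower_l; [exact Ht|]. split; [lra|].
      apply (Rle_trans _ (INR N + 1)); [lra|]. rewrite <- S_INR. apply le_INR, Hl. }
    pose proof (exp_pos (t * ln X)). fold (Rpower X t) in *.
    pose proof (Rmax_l C 0). pose proof (Rmax_r C 0). nra.
Qed.

(* Bernoulli's inequality applied to [sqrt q] gives quadratic growth of [q ^ l]. *)
Lemma linear_lt_pow q D : 1 < q -> exists K0, forall l, (K0 <= l)%nat -> D * (INR l + 1) < q ^ l.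
Proof.
  intros Hq. set (d := sqrt q - 1).
  assert (Hd : 0 < d).
  { pose proof (sqrt_lt_1_alt 1 q ltac:(lra)) as Hs. rewrite sqrt_1 in Hs. unfold d. lra. }
  assert (Hd2 : 0 < d * d) by nra.
  destruct (INR_unbounded (2 * Rabs D / (d * d) + 1)) as [K0 HK0].
  exists K0. intros l Hl. apply le_INR in Hl.
  assert (Hql : q ^ l = (1 + d) ^ l * (1 + d) ^ l).
  { rewrite <- Rpow_mult_distr. unfold d. f_equal.
    replace (1 + (sqrt q - 1)) with (sqrt q) by ring. symmetry. apply sqrt_sqrt. lra. }
  pose proof (Rle_pow_lin d l ltac:(lra)) as Hb.
  assert (Hx : 2 * Rabs D < INR l * (d * d)).
  { replace (2 * Rabs D) with (2 * Rabs D / (d * d) * (d * d)) by (field; lra).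
    apply Rmult_lt_compat_r; lra. }
  assert (Hsq : (1 + INR l * d) * (1 + INR l * d) <= q ^ l).
  { rewrite Hql. assert (0 <= INR l * d) by (apply Rmult_le_pos; [apply pos_INR | lra]).
    apply Rmult_le_compat; lra. }
  assert (Hl1 : 1 < INR l).
  { assert (0 <= 2 * Rabs D / (d * d)).
    { apply Rdiv_le_0_compat; [pose proof (Rabs_pos D); lra | exact Hd2]. }
    lra. }
  assert (2 * Rabs D * INR l < INR l * (d * d) * INR l) by (apply Rmult_lt_compat_r; lra).
  pose proof (Rle_abs D). pose proof (Rabs_pos D). nra.
Qed.

Lemma one_le_of_pow2_growth s D :
  (forall K0, exists l, (K0 <= l)%nat /\ 2 ^ l <= D * (INR l + 1) * Rpower 2 s ^ l) -> 1 <= s.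
Proof.
  intros H. destruct (Rle_or_lt 1 s) as [|Hs]; [assumption | exfalso].
  set (rho := Rpower 2 s).
  assert (Hrho : 0 < rho < 2).
  { split; [apply exp_pos|].
    unfold rho. rewrite <- (Rpower_1 2) at 2 by lra. apply Rpower_lt; lra. }
  destruct (linear_lt_pow (2 / rho) D) as [K0 HK0].
  { apply (Rmult_lt_reg_r rho); [lra|]. unfold Rdiv. rewrite Rmult_assoc, Rinv_l; lra. }
  destruct (H K0) as (l & Hl & Hle). fold rho in Hle. specialize (HK0 l Hl).
  assert (Hrl : 0 < rho ^ l) by (apply pow_lt; lra).
  assert (Hq : (2 / rho) ^ l * rho ^ l = 2 ^ l).
  { rewrite <- Rpow_mult_distr. f_equal. field. lra. }
  apply (Rmult_lt_compat_r (rho ^ l)) in HK0; [lra | exact Hrl].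
Qed.

Lemma pow2_le_representations A (hA : prodsum_all A) N l : (2 ^ l <= N)%nat ->
  2 ^ l <= (1 + INR (pair_count A N N)) * (1 + INR (countA A N)).
Proof.
  intros Hl. apply le_INR in Hl.
  rewrite pow_INR in Hl. replace (INR 2) with 2 in Hl by (simpl; lra).
  pose proof (le_INR _ _ (succ_le_representations A hA N)) as H.
  rewrite mult_INR, !plus_INR, S_INR in H. simpl (INR 1) in H. lra.
Qed.

Lemma liminf_exponent_ge_one_third A (hA : prodsum_all A) t :
  0 <= t -> liminf_finite A t -> 1 / 3 <= t.
Proof.
  intros Ht Hinf. destruct (liminf_finite_pow2 A t Ht Hinf) as [C HC].
  enough (1 <= t + t + t) by lra.
  pose proof (one_le_Rpower2 t Ht) as Hr. set (r := Rpower 2 t) in *.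
  apply (one_le_of_pow2_growth _ ((1 + C) * (1 + C * C) * (r * r * r))).
  rewrite !Rpower_plus. fold r. intros K0.
  destruct (HC K0) as (N & l & Hl & [HNlo _] & Hc). exists l. split; [exact Hl|].
  pose proof (pow2_le_representations A hA N l HNlo) as Hrep.
  pose proof (le_INR _ _ (pair_count_le_mul A N N)) as HP. rewrite mult_INR in HP.
  set (c := INR (countA A N)) in *. set (P := INR (pair_count A N N)) in *.
  assert (Ha : 1 <= r ^ S l) by (apply pow_R1_Rle; exact Hr).
  set (a := r ^ S l) in *.
  assert (Hc0 : 0 <= c) by apply pos_INR.
  assert (H1 : 1 + c <= (1 + C) * a) by lra.
  assert (H2 : 1 + P <= (1 + C * C) * (a * a)).
  { assert (c * c <= (C * a) * (C * a)) by (apply Rmult_le_compat; lra). nra. }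
  assert (E : (1 + C) * (1 + C * C) * (r * r * r) * (r * r * r) ^ l
              = ((1 + C * C) * (a * a)) * ((1 + C) * a)).
  { unfold a. simpl pow. rewrite !Rpow_mult_distr. ring. }
  assert (Hprod : (1 + P) * (1 + c) <= ((1 + C * C) * (a * a)) * ((1 + C) * a)).
  { apply Rmult_le_compat; try lra. apply Rplus_le_le_0_compat; [lra | apply pos_INR]. }
  assert (0 <= (1 + C) * (1 + C * C) * (r * r * r) * (r * r * r) ^ l).
  { rewrite E. apply Rmult_le_pos; nra. }
  pose proof (pos_INR l). nra.
Qed.

Lemma exponent_sum_ge_one A (hA : prodsum_all A) t1 t2 : 0 <= t1 -> 0 <= t2 ->
  liminf_finite A t1 -> limsup_finite A t2 -> 1 <= t1 + t2.
Proof.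
  intros Ht1 Ht2 Hinf Hsup.
  destruct (liminf_finite_pow2 A t1 Ht1 Hinf) as [C HC].
  destruct (limsup_finite_pow2 A t2 Ht2 Hsup) as [K HK].
  pose proof (one_le_Rpower2 t1 Ht1) as Hr1. set (r1 := Rpower 2 t1) in *.
  pose proof (one_le_Rpower2 t2 Ht2) as Hr. set (r := Rpower 2 t2) in *.
  assert (HK0 : 0 <= K).
  { pose proof (HK 0%nat) as H0. rewrite pow_O, Rmult_1_r in H0.
    exact (Rle_trans _ _ _ (pos_INR _) H0). }
  apply (one_le_of_pow2_growth _ ((1 + C) * (1 + K + K * K * r) * (r1 * r))).
  rewrite Rpower_plus. fold r1 r. intros K0.
  destruct (HC K0) as (N & l & Hl & [HNlo HNhi] & Hc). exists l. split; [exact Hl|].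
  pose proof (pow2_le_representations A hA N l HNlo) as Hrep.
  assert (HP : INR (pair_count A N N) <= K * r ^ S l + INR (S l) * (K * K * r ^ S (S l))).
  { apply (Rle_trans _ (INR (pair_count A N (2 ^ S l)))).
    - apply le_INR, pair_count_mono. lia.
    - apply (pair_count_pow2 A K r HK N (S l)); lia. }
  set (c := INR (countA A N)) in *. set (P := INR (pair_count A N N)) in *.
  assert (Ha : 1 <= r1 ^ S l) by (apply pow_R1_Rle; exact Hr1).
  assert (Hb : 1 <= r ^ S l) by (apply pow_R1_Rle; exact Hr).
  set (a := r1 ^ S l) in *. set (b := r ^ S l) in *.
  change (r ^ S (S l)) with (r * b) in HP. rewrite S_INR in HP.
  assert (Hc0 : 0 <= c) by apply pos_INR.
  pose proof (pos_INR l) as Hl0.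
  assert (H1 : 1 + c <= (1 + C) * a) by lra.
  assert (H2 : 1 + P <= (INR l + 1) * b * (1 + K + K * K * r)).
  { assert (0 <= INR l * (K * b)) by (apply Rmult_le_pos; nra).
    assert (0 <= INR l * b) by nra.
    nra. }
  assert (E : (1 + C) * (1 + K + K * K * r) * (r1 * r) * (INR l + 1) * (r1 * r) ^ l
              = ((INR l + 1) * b * (1 + K + K * K * r)) * ((1 + C) * a)).
  { unfold a, b. simpl pow. rewrite !Rpow_mult_distr. ring. }
  assert (Hprod : (1 + P) * (1 + c) <= ((INR l + 1) * b * (1 + K + K * K * r)) * ((1 + C) * a)).
  { apply Rmult_le_compat; try lra. apply Rplus_le_le_0_compat; [lra | apply pos_INR]. }
  lra.
Qed.

Lemma Glb_Rbar_plus_ge (E1 E2 : R -> Prop) (m1 m2 c : R) :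
  (forall x, E1 x -> m1 <= x) -> (forall y, E2 y -> m2 <= y) ->
  (forall x y, E1 x -> E2 y -> c <= x + y) ->
  Rbar_le c (Rbar_plus (Glb_Rbar E1) (Glb_Rbar E2)).
Proof.
  intros H1 H2 H12.
  destruct (Glb_Rbar_correct E1) as [_ G1]. destruct (Glb_Rbar_correct E2) as [_ G2].
  assert (L1 : Rbar_le m1 (Glb_Rbar E1)) by (apply G1; exact H1).
  assert (L2 : Rbar_le m2 (Glb_Rbar E2)) by (apply G2; exact H2).
  assert (Hy : forall y, E2 y -> Rbar_le (c - y) (Glb_Rbar E1)).
  { intros y Hy. apply G1. intros x Hx. simpl. specialize (H12 x y Hx Hy). lra. }
  destruct (Glb_Rbar E1) as [a| |]; [| destruct (Glb_Rbar E2); easy | easy].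
  assert (Hb : Rbar_le (c - a) (Glb_Rbar E2)).
  { apply G2. intros y Hy'. specialize (Hy y Hy'). simpl in *. lra. }
  destruct (Glb_Rbar E2) as [b| |]; simpl in *; [lra | easy | easy].
Qed.

Theorem proposition3p1 (A : nat -> Prop) (hA : prodsum_all A) :
  Rbar_le (Finite (1/3)) (alphaA A) /\
  Rbar_le (Finite (1/2)) (betaA A) /\
  Rbar_le (Finite 1) (Rbar_plus (alphaA A) (betaA A)).
Proof.
  split; [|split].
  - apply Glb_Rbar_correct. intros t [Ht Hinf].
    exact (liminf_exponent_ge_one_third A hA t Ht Hinf).
  - apply Glb_Rbar_correct. intros t [Ht Hsup]. simpl.
    pose proof (exponent_sum_ge_one A hA t t Ht Ht (limsup_finite_liminf_finite A t Hsup) Hsup).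
    lra.
  - apply (Glb_Rbar_plus_ge _ _ 0 0); [tauto | tauto |].
    intros t1 t2 [Ht1 Hinf] [Ht2 Hsup]. exact (exponent_sum_ge_one A hA t1 t2 Ht1 Ht2 Hinf Hsup).
Qed.
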